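(* Let $\mathcal{C}\subseteq\mathbb{R}^n$ be a nonempty closed convex set. For any $\theta_0\in\mathcal{C}$, $$K_{\mathcal{C}}=\{v:\mathbb{R}_+v\subseteq F_{\mathcal{C}}(\theta_0)\}=\bigcap_{\sigma>0}\frac{F_{\mathcal{C}}(\theta_0)}{\sigma}.$$ Moreover, $K_{\mathcal{C}}\subseteq T_{\mathcal{C}}(\theta)$ for every $\theta\in\mathcal{C}$. If furthermore $F_{\mathcal{C}}(\theta_0)$ is a cone, then for $\theta\in\mathcal{C}$ the equality $K_{\mathcal{C}}=T_{\mathcal{C}}(\theta)$ holds if and only if $\theta_0-(\theta-\theta_0)\in\mathcal{C}$; in particular $K_{\mathcal{C}}=T_{\mathcal{C}}(\theta_0)=F_{\mathcal{C}}(\theta_0)$.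
   Context: For $\theta_0\in\mathcal{C}$: $F_{\mathcal{C}}(\theta_0)=\{\theta-\theta_0:\theta\in\mathcal{C}\}$, and the tangent cone is $T_{\mathcal{C}}(\theta_0)=\mathrm{cl}\{\alpha(\theta-\theta_0):\alpha\ge0,\theta\in\mathcal{C}\}$. The core cone is $K_{\mathcal{C}}=\bigcap_{\theta\in\mathcal{C}}T_{\mathcal{C}}(\theta)$. For $v\in\mathbb{R}^n$, $\mathbb{R}_+v=\{\alpha v:\alpha\ge0\}$, and $S/\sigma=\{s/\sigma:s\in S\}$. *)

(* R^n is modelled as 'rV[R]_n, R : realType. *)
From HB Require Import structures.
From mathcomp Require Import all_boot all_order all_algebra.
From mathcomp Require Import all_classical all_reals all_analysis.
Set Implicit Arguments. Unset Strict Implicit. Unset Printing Implicit Defensive.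
Import Order.TTheory GRing.Theory Num.Theory.
Import numFieldNormedType.Exports.
Local Open Scope classical_set_scope.
Local Open Scope ring_scope.

Section Defs.
Context {R : realType} {n : nat}.
Local Notation V := 'rV[R]_n.

Definition Fset (C : set V) (theta0 : V) : set V :=
  [set theta - theta0 | theta in C].

Definition Tcone (C : set V) (theta0 : V) : set V :=
  closure [set v | exists alpha theta, 0 <= alpha /\ C theta /\
                                      v = alpha *: (theta - theta0)].

Definition Kcore (C : set V) : set V := \bigcap_(theta in C) Tcone C theta.

Definition ray (v : V) : set V := [set alpha *: v | alpha in [set a : R | 0 <= a]].

Definition sdiv (S : set V) (sigma : R) : set V := [set sigma^-1 *: s | s in S].

Definition is_cone (S : set V) : Prop :=
  forall v alpha, S v -> 0 <= alpha -> S (alpha *: v).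
End Defs.

From HB Require Import structures.
From mathcomp Require Import all_boot all_order all_algebra.
From mathcomp Require Import all_classical all_reals all_analysis.
From mathcomp Require Import ring lra.
Set Implicit Arguments. Unset Strict Implicit. Unset Printing Implicit Defensive.
Import Order.TTheory GRing.Theory Num.Theory.
Import numFieldNormedType.Exports.
Local Open Scope classical_set_scope.
Local Open Scope ring_scope.

(* The only nontrivial inclusion is K_C ⊆ {v | R_+ v ⊆ F_C(θ0)}.  Let v lie in
   every tangent cone, t >= 0, and let p be the point of C nearest to
   x = θ0 + t v.  Then x - p makes an obtuse angle with every y - p, y ∈ C,
   hence with every tangent direction at p, in particular with v; so
   |x - p|^2 = t <x - p, v> + <x - p, θ0 - p> <= 0 and x = p ∈ C.
   When F_C(θ0) is a cone it is a closed convex cone, hence closed under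
   addition, so T_C(θ) is the closed cone generated by F_C(θ0) + (θ0 - θ),
   which is F_C(θ0) exactly when θ0 - θ ∈ F_C(θ0). *)

Lemma le0_of_le_small_mulr (R : realFieldType) (a b : R) : 0 <= b ->
  (forall l, 0 < l -> l <= 1 -> a <= l * b) -> a <= 0.
Proof.
move=> b0 le_ab; rewrite leNgt; apply/negP => a0.
have ab0 : 0 < a + b by rewrite ltr_wpDr.
have := le_ab (a / (a + b)); rewrite divr_gt0 // ler_pdivrMr // mul1r lerDl.
move=> /(_ isT b0); rewrite mulrAC ler_pdivlMr //; nra.
Qed.

Section ConvexGeometry.
Context {R : realType} {n : nat}.
Local Notation V := 'rV[R]_n.
Implicit Types (C S : set V) (u v w x y : V).

Lemma convex_set_segment C x y (l : R) : convex_set C -> C x -> C y ->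
  0 <= l -> l <= 1 -> C (x + l *: (y - x)).
Proof.
move=> convC Cx Cy l0 l1.
have := convC y x (Itv01 l0 l1) (mem_set Cy) (mem_set Cx); rewrite inE.
by congr C; rewrite /conv /= /unstable.onem scalerBl scale1r scalerBr addrCA.
Qed.

Definition dot u w : R := \sum_i u ord0 i * w ord0 i.

Lemma dotC u w : dot u w = dot w u.
Proof. by apply: eq_bigr => i _; rewrite mulrC. Qed.

Lemma dotDr u w1 w2 : dot u (w1 + w2) = dot u w1 + dot u w2.
Proof. by rewrite /dot -big_split; apply: eq_bigr => i _; rewrite !mxE mulrDr. Qed.

Lemma dotBr u w1 w2 : dot u (w1 - w2) = dot u w1 - dot u w2.
Proof. by rewrite /dot -sumrB; apply: eq_bigr => i _; rewrite !mxE mulrBr. Qed.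

Lemma dotZr u a w : dot u (a *: w) = a * dot u w.
Proof. by rewrite /dot mulr_sumr; apply: eq_bigr => i _; rewrite !mxE mulrCA. Qed.

Lemma dotBl u1 u2 w : dot (u1 - u2) w = dot u1 w - dot u2 w.
Proof. by rewrite dotC dotBr !(dotC w). Qed.

Lemma dotZl a u w : dot (a *: u) w = a * dot u w.
Proof. by rewrite dotC dotZr dotC. Qed.

Lemma sqr_coord_le_dot u i : u ord0 i ^+ 2 <= dot u u.
Proof.
rewrite /dot (bigD1 i) //= -expr2 lerDl.
by apply: sumr_ge0 => j _; rewrite -expr2 sqr_ge0.
Qed.

Lemma dot_self_ge0 u : 0 <= dot u u.
Proof. by apply: sumr_ge0 => i _; rewrite -expr2 sqr_ge0. Qed.

Lemma dot_self_eq0 u : dot u u = 0 -> u = 0.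
Proof.
move=> u0; apply/matrixP => i j; rewrite ord1 mxE.
by apply/eqP; rewrite -sqrf_eq0 eq_le sqr_ge0 -u0 sqr_coord_le_dot.
Qed.

Lemma dot_self_subZ u w (l : R) :
  dot (u - l *: w) (u - l *: w) = dot u u - 2 * l * dot u w + l ^+ 2 * dot w w.
Proof. by rewrite !(dotBl, dotBr, dotZl, dotZr) (dotC w u); ring. Qed.

(* [`|u|] is the sup norm of the coordinates. *)
Lemma normr_le_dot u : `|u| <= 1 + dot u u.
Proof.
rewrite [leLHS]/Num.Def.normr /= mx_normrE.
apply: bigmax_le => [|[i j] _] /=; first by rewrite addr_ge0 ?dot_self_ge0.
rewrite ord1; apply: le_trans (lerD (lexx 1) (sqr_coord_le_dot u j)).
by rewrite ler_norml; apply/andP; split; nra.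
Qed.

Lemma dot_continuous {T : topologicalType} (f g : T -> V) :
  continuous f -> continuous g -> continuous (fun t => dot (f t) (g t)).
Proof.
move=> cf cg; apply: (@continuous_big _ _ +%R 0 xpredT add_continuous) => i _ t.
have coordC (h : T -> V) : continuous h -> {for t, continuous (fun s => h s ord0 i)}.
  move=> ch; apply: (@continuous_comp _ _ _ h (fun M : V => M ord0 i)).
    exact: ch.
  exact: coord_continuous.
exact: continuousM (coordC f cf) (coordC g cg).
Qed.

Lemma closed_dot_le0 u : closed [set w | dot u w <= 0].
Proof.
rewrite -[X in closed X]/(dot u @^-1` [set r | r <= 0]).
apply: preimage_closed; last exact: closed_le.
by move=> w _; apply: dot_continuous => // ?; [exact: cst_continuous | exact: cvg_id].
Qed.

Lemma nearest_point_ex C x : closed C -> C !=set0 ->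
  exists2 p, C p & forall y, C y -> dot (x - p) (x - p) <= dot (x - y) (x - y).
Proof.
move=> closedC [y0 Cy0].
pose d y := dot (x - y) (x - y).
have dC : continuous d.
  have subx : continuous (fun y : V => x - y).
    by move=> z; apply: continuousB; [exact: cst_continuous | exact: cvg_id].
  exact: dot_continuous.
pose A := C `&` d @^-1` [set r | r <= d y0].
have closedA : closed A.
  apply: closedI => //; apply: preimage_closed; last exact: closed_le.
  by move=> z _; exact: dC.
have boundedA : bounded_set A.
  rewrite /= /bounded_near; near=> B => y [_ /= dy].
  apply: le_trans (_ : `|x| + (1 + d y0) <= B).
    rewrite -[y](subKr x) (le_trans (ler_normB _ _)) // lerD2l.
    by rewrite (le_trans (normr_le_dot _)) // lerD2l.
  by near: B; apply: nbhs_pinfty_ge; exact: num_real.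
have [p /set_mem[Cp dp] pmin] : exists2 p, p \in A & forall y, y \in A -> d p <= d y.
  apply: EVT_min_rV; first by exists y0; split => /=.
    exact: bounded_closed_compact.
  by apply: continuous_subspaceT => z; exact: dC.
exists p => // y Cy; have [dy|dy] := leP (d y) (d y0).
  by apply: pmin; apply/mem_set.
by apply: le_trans dp (ltW dy).
Unshelve. all: by end_near.
Qed.

Lemma nearest_point_obtuse C x p : convex_set C -> C p ->
    (forall y, C y -> dot (x - p) (x - p) <= dot (x - y) (x - y)) ->
  forall y, C y -> dot (x - p) (y - p) <= 0.
Proof.
move=> convC Cp pmin y Cy; set w := y - p.
suff : 2 * dot (x - p) w <= 0 by rewrite pmulr_rle0.
apply: le0_of_le_small_mulr (dot_self_ge0 w) _ => l l0 l1.
have := pmin _ (convex_set_segment convC Cp Cy (ltW l0) l1).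
rewrite opprD addrA dot_self_subZ -/w => le_d.
by rewrite -(ler_pM2l l0); nra.
Qed.

Lemma FsetP C t0 v : Fset C t0 v <-> C (v + t0).
Proof.
split=> [[y Cy <-]|Cv]; first by rewrite subrK.
by exists (v + t0); rewrite ?addrK.
Qed.

Lemma closed_Fset C t0 : closed C -> closed (Fset C t0).
Proof.
move=> closedC; have -> : Fset C t0 = (fun w => w + t0) @^-1` C.
  by apply/seteqP; split => w /FsetP.
apply: preimage_closed => // w _.
by apply: continuousD; [exact: cvg_id | exact: cst_continuous].
Qed.

Lemma convex_Fset C t0 : convex_set C -> convex_set (Fset C t0).
Proof.
move=> convC x y l /set_mem/FsetP Cx /set_mem/FsetP Cy; apply/mem_set/FsetP.
suff -> : conv l x y + t0 = conv l (x + t0 : convex_lmodType V) (y + t0).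
  by rewrite -inE; apply: convC; rewrite inE.
by rewrite /conv /= /unstable.onem !scalerDr addrACA -scalerDl subrKC scale1r.
Qed.

Lemma cone_addr_closed S a b : convex_set S -> is_cone S -> S a -> S b -> S (a + b).
Proof.
move=> convS coneS Sa Sb.
have half_ge0 : 0 <= 2^-1 :> R by rewrite invr_ge0 ler0n.
have half_le1 : 2^-1 <= 1 :> R by rewrite invf_le1 ?ler1n ?ltr0n.
have := coneS _ 2 (convex_set_segment convS Sa Sb half_ge0 half_le1) (ler0n _ 2).
by rewrite scalerDr scalerA mulfV ?pnatr_eq0 // scale1r scaler_nat mulr2n -addrA subrKC.
Qed.

Lemma ray_sub_cone S v : is_cone S -> ray v `<=` S <-> S v.
Proof.
move=> coneS; split=> [rv | Sv _ [a a0 <-]]; last exact: coneS.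
by rewrite -[v]scale1r; apply: rv; exists 1 => //=; exact: ler01.
Qed.

Lemma ray_sub_bigcap_sdiv S : S 0 ->
  [set v | ray v `<=` S] = \bigcap_(sigma in [set s : R | 0 < s]) sdiv S sigma.
Proof.
move=> S0; apply/seteqP; split=> v.
  move=> rv s s0; exists (s *: v); first by apply: rv; exists s => //; exact: ltW.
  by rewrite scalerA mulVf ?gt_eqF // scale1r.
move=> Sv w [a]; rewrite /= le_eqVlt => /predU1P[<-|a_gt0] <-; first by rewrite scale0r.
have [s Ss <-] := Sv a a_gt0.
by rewrite scalerA mulfV ?gt_eqF // scale1r.
Qed.

Lemma Tcone_sub_closed_cone C th S : closed S -> is_cone S ->
  (forall y, C y -> S (y - th)) -> Tcone C th `<=` S.
Proof.
move=> closedS coneS CS v; rewrite /Tcone closureEbigcap; apply; split=> //.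
by move=> _ [a [y [a0 [Cy ->]]]]; exact: coneS (CS y Cy) a0.
Qed.

Lemma Tcone_dot_le0 C p u v : (forall y, C y -> dot u (y - p) <= 0) ->
  Tcone C p v -> dot u v <= 0.
Proof.
move=> obtuse; rewrite /Tcone closureEbigcap => /(_ [set w | dot u w <= 0]).
apply; split; first exact: closed_dot_le0.
by move=> _ [a [y [a0 [Cy ->]]]]; rewrite /= dotZr mulr_ge0_le0 ?obtuse.
Qed.

Lemma recession_sub_Tcone C t0 th v : ray v `<=` Fset C t0 -> Tcone C th v.
Proof.
move=> rv B /nbhs_ballP[e e0 sub_eB].
(* a^-1 (t0 + a v - th) = v + a^-1 (t0 - th) is within e of v *)
pose a := (`|t0 - th| + 1) / e.
have a0 : 0 < a by rewrite divr_gt0 // ltr_wpDl.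
have [y Cy yE] : Fset C t0 (a *: v) by apply: rv; exists a => //; exact: ltW.
exists (a^-1 *: (y - th)); split; first by exists a^-1, y; rewrite invr_ge0 ltW.
apply: sub_eB; rewrite -ball_normE /ball_ /=.
have -> : y - th = a *: v + (t0 - th) by rewrite -yE addrA subrK.
rewrite scalerDr scalerA mulVf ?gt_eqF // scale1r opprD addrA subrr add0r normrN.
rewrite normrZ ger0_norm ?invr_ge0 ?ltW // /a invf_div mulrAC.
by rewrite ltr_pdivrMr ?ltr_wpDl // ltr_pM2l // ltrDl.
Qed.

Lemma Kcore_sub_recession C t0 v : closed C -> convex_set C -> C t0 ->
  Kcore C v -> ray v `<=` Fset C t0.
Proof.
move=> closedC convC Ct0 Kv _ [t t_ge0 <-]; apply/FsetP; set x := t *: v + t0.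
have [p Cp pmin] := nearest_point_ex x closedC (ex_intro _ t0 Ct0).
have obtuse := nearest_point_obtuse convC Cp pmin.
have dv : dot (x - p) v <= 0 := Tcone_dot_le0 obtuse (Kv p Cp).
have dx : dot (x - p) (x - p) <= 0.
  have xpE : x - p = t *: v + (t0 - p) by rewrite addrA.
  by rewrite [X in dot _ X]xpE dotDr dotZr -[0]addr0 lerD ?obtuse ?mulr_ge0_le0.
have /dot_self_eq0/subr0_eq -> // : dot (x - p) (x - p) = 0.
by apply/le_anti; rewrite dx dot_self_ge0.
Qed.

End ConvexGeometry.

Theorem lemma7 (R : realType) (n : nat) (C : set 'rV[R]_n) :
  C !=set0 -> closed C -> convex_set C ->
  forall theta0 : 'rV[R]_n, C theta0 ->
    (Kcore C = [set v | ray v `<=` Fset C theta0] /\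
     Kcore C = \bigcap_(sigma in [set s : R | 0 < s]) sdiv (Fset C theta0) sigma) /\
    (forall theta, C theta -> Kcore C `<=` Tcone C theta) /\
    (is_cone (Fset C theta0) ->
       (forall theta, C theta ->
          (Kcore C = Tcone C theta <-> C (theta0 - (theta - theta0)))) /\
       Kcore C = Tcone C theta0 /\ Tcone C theta0 = Fset C theta0).
Proof.
move=> _ closedC convC t0 Ct0.
have KR : Kcore C = [set v | ray v `<=` Fset C t0].
  apply/seteqP; split=> v; first exact: Kcore_sub_recession.
  by move=> rv th _; exact: recession_sub_Tcone rv.
have KT th : C th -> Kcore C `<=` Tcone C th by move=> Cth v Kv; exact: Kv.
split; first by rewrite -ray_sub_bigcap_sdiv //; apply/FsetP; rewrite add0r.
split=> // coneF.
have KF : Kcore C = Fset C t0.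
  by rewrite KR; apply/seteqP; split=> v /=; rewrite (ray_sub_cone _ coneF).
have KTE th : C th -> Kcore C = Tcone C th <-> C (t0 - (th - t0)).
  move=> Cth; rewrite opprB; split=> [KTth | Cr].
    have : Tcone C th (t0 - th) by apply: subset_closure; exists 1, t0; rewrite scale1r.
    by rewrite -KTth KF => /FsetP; rewrite addrC.
  apply/seteqP; split; first exact: KT.
  rewrite KF; apply: (Tcone_sub_closed_cone (closed_Fset closedC) coneF) => y Cy.
  rewrite -(subrKA t0); apply: (cone_addr_closed (convex_Fset convC) coneF).
    by apply/FsetP; rewrite subrK.
  by apply/FsetP; rewrite addrC.
have KT0 : Kcore C = Tcone C t0 by apply/(KTE t0 Ct0); rewrite subrr subr0.
by split=> //; rewrite -KT0.
Qed.
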